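(* Let $\{x_k\}$ be generated by the Subgradient-InexP method with the exogenous stepsize rule, under the standing assumptions, and let $\rho:=\nu+2\mu$ where $\nu=\frac{1+2\bar\gamma}{1-2\bar\lambda}$. Then for every $x\in C$ and every $k=0,1,\dots$, $$\|x_{k+1}-x\|^2\le\|x_k-x\|^2+\rho\alpha_k^2-2\frac{\alpha_k}{\eta_k}\big[f(x_k)-f(x)\big].$$
   Context: Problem: minimize a convex $f:\mathbb{R}^n\to\mathbb{R}$ over a nonempty closed convex $C\subset\mathbb{R}^n$. For $\epsilon\ge0$, $\partial_\epsilon f(x):=\{s: f(y)\ge f(x)+\langle s,y-x\rangle-\epsilon\ \forall y\}$. Relative error tolerance function: any $\varphi_{\gamma,\theta,\lambda}:(\mathbb{R}^n)^3\to[0,\infty)$ with $\varphi_{\gamma,\theta,\lambda}(u,v,w)\le\gamma\|v-u\|^2+\theta\|w-v\|^2+\lambda\|w-u\|^2$; for $u\in C$, $\mathcal{P}_C(\varphi_{\gamma,\theta,\lambda},u,v):=\{w\in C:\langle v-w,z-w\rangle\le\varphi_{\gamma,\theta,\lambda}(u,v,w)\ \forall z\in C\}$. Subgradient-InexP method: $x_0\in C$; at iteration $k$, if $0\in\partial f(x_k)$ stop; otherwise choose nonzero $s_k\in\partial_{\epsilon_k}f(x_k)$, stepsize $t_k>0$, and $x_{k+1}\in\mathcal{P}_C(\varphi_{\gamma_k,\theta_k,\lambda_k},x_k,x_k-t_ks_k)$. Standing assumptions: $\gamma_k\in[0,\bar\gamma)$, $\theta_k\in[0,\bar\theta)$, $\lambda_k\in[0,\bar\lambda)$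 with $\bar\gamma\ge0$, $\bar\theta,\bar\lambda\in[0,1/2)$; the sequence is infinite. Exogenous stepsize rule: $\mu\ge0$; $\{\alpha_k\}$, $\{\epsilon_k\}$ nonnegative, $\{\epsilon_k\}$ nonincreasing, $\sum_k\alpha_k=+\infty$, $\sum_k\alpha_k^2<+\infty$, $\epsilon_k\le\mu\alpha_k$ for all $k$; $t_k:=\alpha_k/\eta_k$ with $\eta_k:=\max\{1,\|s_k\|\}$. *)

From HB Require Import structures.
From mathcomp Require Import all_boot all_order all_algebra.
From mathcomp Require Import all_classical all_reals all_analysis.
Set Implicit Arguments. Unset Strict Implicit. Unset Printing Implicit Defensive.
Import Order.TTheory GRing.Theory Num.Theory.
Import numFieldNormedType.Exports.
Local Open Scope classical_set_scope.
Local Open Scope ring_scope.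

Section Defs.
Variables (R : realType) (n : nat).
Local Notation vec := 'rV[R]_n.

Definition dotv (u v : vec) : R := \sum_(i < n) u ord0 i * v ord0 i.
Definition enorm (u : vec) : R := Num.sqrt (dotv u u).

Definition convex_fun (f : vec -> R) : Prop :=
  forall (x y : vec) (l : R), 0 <= l <= 1 ->
    f (l *: x + (1 - l) *: y) <= l * f x + (1 - l) * f y.

Definition convex_set_Rn (C : set vec) : Prop :=
  forall (x y : vec) (l : R), C x -> C y -> 0 <= l <= 1 ->
    C (l *: x + (1 - l) *: y).

Definition eps_subdiff (f : vec -> R) (eps : R) (x : vec) : set vec :=
  [set s | forall y : vec, f y >= f x + dotv s (y - x) - eps].

Definition subdiff (f : vec -> R) (x : vec) : set vec := eps_subdiff f 0 x.

Definition rel_err_tol (gam the lam : R) (phi : vec -> vec -> vec -> R) : Prop :=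
  forall u v w : vec, 0 <= phi u v w /\
    phi u v w <= gam * enorm (v - u) ^+ 2 + the * enorm (w - v) ^+ 2
                 + lam * enorm (w - u) ^+ 2.

Definition inexact_proj (C : set vec) (phi : vec -> vec -> vec -> R)
    (u v : vec) : set vec :=
  [set w | C w /\ forall z : vec, C z -> dotv (v - w) (z - w) <= phi u v w].

(* Subgradient-InexP iterates (nonterminating) *)
Definition subgrad_inexp (f : vec -> R) (C : set vec)
    (x s : nat -> vec) (eps t gam the lam : nat -> R)
    (phi : nat -> vec -> vec -> vec -> R) : Prop :=
  C (x 0%N) /\
  forall k : nat,
    ~ subdiff f (x k) 0 /\
    s k != 0 /\ eps_subdiff f (eps k) (x k) (s k) /\
    0 < t k /\
    rel_err_tol (gam k) (the k) (lam k) (phi k) /\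
    inexact_proj C (phi k) (x k) (x k - t k *: s k) (x k.+1).

End Defs.

(* Write u := x_k, v := u - t_k s_k (the subgradient step) and w := x_{k+1},
   a relative inexact projection of v onto C.  The proof has three parts.
   - Inexact projections: testing the defining inequality of w at z = u and
     using the error bound on phi gives (1 - 2 lam) |w - u|^2 <= (1 + 2 gam)
     |v - u|^2; testing it at an arbitrary z in C then yields
     |w - z|^2 <= |v - z|^2 + (nu_k - 1) |v - u|^2 with
     nu_k = (1 + 2 gam_k) / (1 - 2 lam_k) <= nu.
   - Subgradient step: expanding |v - z|^2 and using the eps-subgradient
     inequality <s, u - z> >= f u - f z - eps gives the one-step estimate
     |w - z|^2 <= |u - z|^2 - 2 t (f u - f z) + 2 t eps + nu_k (t |s|)^2.
   - Exogenous stepsizes: t = alpha / max(1, |s|) implies t <= alpha and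
     t |s| <= alpha, so 2 t eps <= 2 mu alpha^2 and nu_k (t|s|)^2 <= nu alpha^2.
   The file first develops the Euclidean geometry of dotv/enorm, then these
   three parts, and finally derives the theorem. *)
From HB Require Import structures.
From mathcomp Require Import all_boot all_order all_algebra.
From mathcomp Require Import all_classical all_reals all_analysis.
From mathcomp Require Import lra.
Set Implicit Arguments. Unset Strict Implicit. Unset Printing Implicit Defensive.
Import Order.TTheory GRing.Theory Num.Theory.
Import numFieldNormedType.Exports.
Local Open Scope classical_set_scope.
Local Open Scope ring_scope.

Section EuclideanGeometry.
Variables (R : realType) (n : nat).
Implicit Types (u v w z : 'rV[R]_n) (a : R).

Lemma dotvC u v : dotv u v = dotv v u.
Proof. by apply: eq_bigr => i _; rewrite mulrC. Qed.

Lemma dotvDl u v w : dotv (u + v) w = dotv u w + dotv v w.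
Proof. by rewrite /dotv -big_split; apply: eq_bigr => i _; rewrite !mxE mulrDl. Qed.

Lemma dotvZl a u v : dotv (a *: u) v = a * dotv u v.
Proof. by rewrite /dotv mulr_sumr; apply: eq_bigr => i _; rewrite !mxE mulrA. Qed.

Lemma dotvNl u v : dotv (- u) v = - dotv u v.
Proof. by rewrite -scaleN1r dotvZl mulN1r. Qed.

Lemma dotvBl u v w : dotv (u - v) w = dotv u w - dotv v w.
Proof. by rewrite dotvDl dotvNl. Qed.

Lemma dotv_ge0 u : 0 <= dotv u u.
Proof. by apply: sumr_ge0 => i _; rewrite -expr2 sqr_ge0. Qed.

Lemma enorm_sqr u : enorm u ^+ 2 = dotv u u.
Proof. by rewrite /enorm sqr_sqrtr // dotv_ge0. Qed.

Lemma enorm_ge0 u : 0 <= enorm u.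
Proof. exact: sqrtr_ge0. Qed.

Lemma enorm_distC u v : enorm (u - v) = enorm (v - u).
Proof. by rewrite /enorm -opprB !dotvNl dotvC dotvNl opprK. Qed.

Lemma enorm_sqrZ a u : enorm (a *: u) ^+ 2 = (a * enorm u) ^+ 2.
Proof. by rewrite exprMn !enorm_sqr dotvZl dotvC dotvZl mulrA -expr2. Qed.

Lemma enorm_sqrB u v :
  enorm (u - v) ^+ 2 = enorm u ^+ 2 + enorm v ^+ 2 - 2 * dotv u v.
Proof.
rewrite !enorm_sqr !dotvBl !(dotvC _ (u - v)) !dotvBl (dotvC u v) mulr2n; lra.
Qed.

Lemma three_point v w z :
  2 * dotv (v - w) (z - w) =
    enorm (v - w) ^+ 2 + enorm (w - z) ^+ 2 - enorm (v - z) ^+ 2.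
Proof.
have -> : v - z = (v - w) - (z - w) by rewrite opprB addrA subrK.
by rewrite (enorm_sqrB (v - w)) (enorm_distC z w); lra.
Qed.

End EuclideanGeometry.

Section InexactProjection.
Variables (R : realType) (n : nat).
Implicit Types (u v w z : 'rV[R]_n).

Definition err_factor (gam lam : R) : R := (1 + 2 * gam) / (1 - 2 * lam).

Lemma err_factor_le (gam lam gbar lbar : R) :
  0 <= gam <= gbar -> 0 <= lam <= lbar -> lbar < 1 / 2 ->
  err_factor gam lam <= err_factor gbar lbar.
Proof.
move=> /andP[g0 ggb] /andP[l0 llb] lb1.
rewrite /err_factor ler_pdivrMr; last by lra.
rewrite mulrAC ler_pdivlMr; last by lra.
by apply: ler_pM; lra.
Qed.

Variables (C : set 'rV[R]_n) (phi : 'rV[R]_n -> 'rV[R]_n -> 'rV[R]_n -> R).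
Variables (gam the lam : R).
Hypothesis phi_tol : rel_err_tol gam the lam phi.

(* Testing the projection inequality at the base point u controls the
   displacement |w - u| by the step length |v - u|. *)
Lemma inexact_proj_displacement u v w :
  the <= 1 / 2 -> C u -> inexact_proj C phi u v w ->
  (1 - 2 * lam) * enorm (w - u) ^+ 2 <= (1 + 2 * gam) * enorm (v - u) ^+ 2.
Proof.
move=> the_le Cu [_ projw]; have := projw u Cu; have [_ phi_le] := phi_tol u v w.
have := three_point v w u; rewrite (enorm_distC v w).
have : 0 <= (1 - 2 * the) * enorm (w - v) ^+ 2 by rewrite mulr_ge0 ?sqr_ge0 //; lra.
lra.
Qed.

Lemma inexact_proj_dist u v w z :
  the <= 1 / 2 -> 0 <= lam < 1 / 2 -> C u -> C z -> inexact_proj C phi u v w ->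
  enorm (w - z) ^+ 2 <=
    enorm (v - z) ^+ 2 + (err_factor gam lam - 1) * enorm (v - u) ^+ 2.
Proof.
move=> the_le /andP[lam_ge0 lam_lt] Cu Cz projw.
have lam_pos : 0 < 1 - 2 * lam by lra.
have displ : enorm (w - u) ^+ 2 <= err_factor gam lam * enorm (v - u) ^+ 2.
  rewrite /err_factor mulrAC ler_pdivlMr // mulrC.
  exact: inexact_proj_displacement the_le Cu projw.
have nu_id : err_factor gam lam * (1 - 2 * lam) = 1 + 2 * gam.
  by rewrite /err_factor divfK // gt_eqF.
have [_ /(_ z Cz) projz] := projw; have [_ phi_le] := phi_tol u v w.
have := three_point v w z; rewrite (enorm_distC v w).
have : 0 <= (1 - 2 * the) * enorm (w - v) ^+ 2 by rewrite mulr_ge0 ?sqr_ge0 //; lra.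
have : lam * enorm (w - u) ^+ 2 <= lam * (err_factor gam lam * enorm (v - u) ^+ 2).
  exact: ler_wpM2l.
have : err_factor gam lam * (1 - 2 * lam) * enorm (v - u) ^+ 2 =
       (1 + 2 * gam) * enorm (v - u) ^+ 2 by rewrite nu_id.
nra.
Qed.

End InexactProjection.

Section SubgradientStep.
Variables (R : realType) (n : nat).
Implicit Types (u s w z : 'rV[R]_n) (f : 'rV[R]_n -> R) (eps T : R).

Lemma eps_subdiff_inner f eps u s z :
  eps_subdiff f eps u s -> f u - f z - eps <= dotv s (u - z).
Proof.
move=> /(_ z); rewrite -[z - u]opprB dotvC dotvNl dotvC; lra.
Qed.

Lemma step_dist u s z T :
  enorm (u - T *: s - z) ^+ 2 =
    enorm (u - z) ^+ 2 - 2 * T * dotv s (u - z) + (T * enorm s) ^+ 2.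
Proof.
rewrite addrAC (enorm_sqrB (u - z)) enorm_sqrZ dotvC dotvZl; lra.
Qed.

Lemma step_length u s T : enorm (u - T *: s - u) ^+ 2 = (T * enorm s) ^+ 2.
Proof. by rewrite addrAC subrr add0r -scaleNr enorm_sqrZ mulNr sqrrN. Qed.

Lemma one_step_estimate f (C : set 'rV[R]_n) phi gam the lam eps T u s w z :
  rel_err_tol gam the lam phi -> the <= 1 / 2 -> 0 <= lam < 1 / 2 -> 0 <= T ->
  C u -> C z -> eps_subdiff f eps u s ->
  inexact_proj C phi u (u - T *: s) w ->
  enorm (w - z) ^+ 2 <=
    enorm (u - z) ^+ 2 - 2 * T * (f u - f z) + 2 * T * eps
    + err_factor gam lam * (T * enorm s) ^+ 2.
Proof.
move=> phi_tol the_le lam_rng T_ge0 Cu Cz sub projw.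
have := inexact_proj_dist phi_tol the_le lam_rng Cu Cz projw.
rewrite step_dist step_length.
have : T * (f u - f z - eps) <= T * dotv s (u - z).
  by apply: ler_wpM2l => //; apply: eps_subdiff_inner.
lra.
Qed.

End SubgradientStep.

Section ExogenousStepsize.
Variable (R : realType).

Lemma normalized_step_le (alpha S : R) :
  0 <= alpha -> alpha / Num.max 1 S <= alpha /\ alpha / Num.max 1 S * S <= alpha.
Proof.
move=> alpha_ge0.
have eta_ge1 : 1 <= Num.max 1 S by rewrite le_max lexx.
have eta_gt0 : 0 < Num.max 1 S by lra.
split.
- by rewrite ler_pdivrMr // -{1}(mulr1 alpha) ler_wpM2l.
- by rewrite mulrAC ler_pdivrMr // ler_wpM2l // le_max lexx orbT.
Qed.

End ExogenousStepsize.

Lemma subgrad_inexp_in_C (R : realType) (n : nat) (f : 'rV[R]_n -> R)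
    (C : set 'rV[R]_n) (x s : nat -> 'rV[R]_n) (eps t gam the lam : nat -> R)
    (phi : nat -> 'rV[R]_n -> 'rV[R]_n -> 'rV[R]_n -> R) :
  subgrad_inexp f C x s eps t gam the lam phi -> forall k, C (x k).
Proof.
by move=> [C0 iter] [|k] //; have [_ [_ [_ [_ [_ [Cxk _]]]]]] := iter k.
Qed.

Theorem mainTheorem3 (R : realType) (n : nat)
  (f : 'rV[R]_n -> R) (C : set 'rV[R]_n)
  (x s : nat -> 'rV[R]_n) (eps t alpha gam the lam : nat -> R)
  (phi : nat -> 'rV[R]_n -> 'rV[R]_n -> 'rV[R]_n -> R)
  (gbar thbar lbar mu : R) :
  convex_fun f ->
  C !=set0 -> closed C -> convex_set_Rn C ->
  0 <= gbar -> 0 <= thbar < 1/2 -> 0 <= lbar < 1/2 ->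
  (forall k, 0 <= gam k < gbar) ->
  (forall k, 0 <= the k < thbar) ->
  (forall k, 0 <= lam k < lbar) ->
  subgrad_inexp f C x s eps t gam the lam phi ->
  (* exogenous stepsize rule *)
  0 <= mu ->
  (forall k, 0 <= alpha k) ->
  (forall k, 0 <= eps k) ->
  nonincreasing_seq eps ->
  series alpha @ \oo --> +oo ->
  cvg (series (fun k => alpha k ^+ 2) @ \oo) ->
  (forall k, eps k <= mu * alpha k) ->
  (forall k, t k = alpha k / Num.max 1 (enorm (s k))) ->
  let nu := (1 + 2 * gbar) / (1 - 2 * lbar) in
  let rho := nu + 2 * mu in
  forall z : 'rV[R]_n, C z -> forall k : nat,
    enorm (x k.+1 - z) ^+ 2 <=
      enorm (x k - z) ^+ 2 + rho * alpha k ^+ 2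
      - 2 * (alpha k / Num.max 1 (enorm (s k))) * (f (x k) - f z).
Proof.
move=> _ _ _ _ _ /andP[_ thbar_lt] /andP[_ lbar_lt] gam_rng the_rng lam_rng
  iter mu_ge0 alpha_ge0 eps_ge0 _ _ _ eps_le t_def nu rho z Cz k.
have [_ [_ [sub [_ [tol projk]]]]] := iter.2 k.
rewrite t_def in projk; set T := alpha k / _ in projk *.
have [T_le T_s_le] := normalized_step_le (enorm (s k)) (alpha_ge0 k).
have T_ge0 : 0 <= T by rewrite divr_ge0 // le_max ler01.
have [gam_ge0 gam_lt] := andP (gam_rng k); have [_ the_lt] := andP (the_rng k).
have [lam_ge0 lam_lt] := andP (lam_rng k).
have the_le : the k <= 1 / 2 by lra.
have lam_half : 0 <= lam k < 1 / 2 by apply/andP; split; lra.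
have descent := one_step_estimate tol the_le lam_half T_ge0
  (subgrad_inexp_in_C iter k) Cz sub projk.
have nu_k_ge0 : 0 <= err_factor (gam k) (lam k) by rewrite divr_ge0 //; lra.
have nu_k_le : err_factor (gam k) (lam k) <= nu by apply: err_factor_le; lra.
have step_err : err_factor (gam k) (lam k) * (T * enorm (s k)) ^+ 2 <= nu * alpha k ^+ 2.
  apply: ler_pM => //; rewrite ?sqr_ge0 //.
  by apply: lerXn2r; rewrite ?nnegrE // mulr_ge0 // enorm_ge0.
have eps_err : T * eps k <= mu * alpha k ^+ 2.
  by rewrite expr2 mulrCA; apply: ler_pM => //; rewrite mulr_ge0.
rewrite /rho; lra.
Qed.
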